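(* (Soundness) For every sequent $\Gamma\vdash\Delta$ of $\text{HXPath}_{\rm D}$: if $\Gamma\vdash\Delta$ is provable in $\mathbf{G}$ (written $\Gamma\vdash_{\mathbf G}\Delta$), then $\Gamma\vdash\Delta$ is valid.
   Context: Syntax of $\text{HXPath}_{\rm D}$: fix pairwise disjoint sets $\mathsf{Prop}$ (propositions, countably infinite), $\mathsf{Nom}$ (nominals, countably infinite), $\mathsf{Mod}$ (modalities, finite), $\mathsf{Cmp}$ (comparisons, finite). Path expressions $\alpha,\beta ::= \mathsf{a} \mid i{:} \mid \varphi? \mid \alpha\beta$ and node expressions $\varphi,\psi ::= p \mid i \mid \bot \mid \varphi\to\psi \mid @_i\varphi \mid \langle \mathsf{a}\rangle\varphi \mid \langle\alpha =_{\mathsf{c}} \beta\rangle \mid \langle \alpha\neq_{\mathsf{c}}\beta\rangle$, with $p\in\mathsf{Prop}$, $i\in\mathsf{Nom}$, $\mathsf{a}\in\mathsf{Mod}$, $\mathsf{c}\in\mathsf{Cmp}$. Abbreviations: $\top:=\bot\to\bot$, $\neg\varphi:=\varphi\to\bot$, $\varphi\lor\psi := \neg\varphi\to\psi$, $\varphi\land\psi:=\neg(\varphi\to\neg\psi)$, $\varphi\leftrightarrow\psi$ as usual; $\epsilon:=\top?$; $\langle j{:}\rangle\varphi := @_j\varphi$, $\langle\psi?\rangle\varphi:=\psi\land\varphi$, $\langle\alpha\beta\rangle\varphi:=\langle\alpha\rangle\langle\beta\rangle\varphi$, $[\alpha]\varphi:=\neg\langle\alpha\rangle\neg\varphi$.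 The symbol $\blacktriangle$ stands for either $=_{\mathsf{c}}$ or $\neq_{\mathsf{c}}$ (for some $\mathsf{c}$). Models: $\mathcal{M}=\langle N,\{R_{\mathsf a}\}_{\mathsf a\in\mathsf{Mod}},\{\approx_{\mathsf c}\}_{\mathsf c\in\mathsf{Cmp}},g,V\rangle$ with $N\neq\emptyset$, each $R_{\mathsf a}\subseteq N\times N$, each $\approx_{\mathsf c}$ an equivalence relation on $N$, $g:\mathsf{Nom}\to N$, $V:\mathsf{Prop}\to 2^N$. Semantics: $\mathcal M,n,n'\Vdash \mathsf a$ iff $nR_{\mathsf a}n'$; $\mathcal M,n,n'\Vdash i{:}$ iff $g(i)=n'$; $\mathcal M,n,n'\Vdash\varphi?$ iff $n=n'$ and $\mathcal M,n\Vdash\varphi$; $\mathcal M,n,n'\Vdash\alpha\beta$ iff there is $n''$ with $\mathcal M,n,n''\Vdash\alpha$ and $\mathcal M,n'',n'\Vdash\beta$; $\mathcal M,n\Vdash p$ iff $n\in V(p)$; $\mathcal M,n\Vdash i$ iff $g(i)=n$; $\bot$ never holds; $\to$ classical; $\mathcal M,n\Vdash @_i\varphi$ iff $\mathcal M,g(i)\Vdash\varphi$; $\mathcal M,n\Vdash\langle\mathsf a\rangle\varphi$ iff some $n'$ has $nR_{\mathsf a}n'$ and $\mathcal M,n'\Vdash\varphi$; $\mathcal M,n\Vdash\langle\alpha=_{\mathsf c}\beta\rangle$ (resp. $\langle\alpha\neq_{\mathsf c}\beta\rangle$) iff there are $n',n''$ with $\mathcal M,n,n'\Vdash\alpha$,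 $\mathcal M,n,n''\Vdash\beta$ and $n'\approx_{\mathsf c}n''$ (resp. $n'\not\approx_{\mathsf c}n''$). Sequents: a sequent $\Gamma\vdash\Delta$ consists of finite (possibly empty) sets $\Gamma,\Delta$ of node expressions each of the form $\langle i{:}\blacktriangle j{:}\rangle$ or $@_i\varphi$. It is valid iff for every model $\mathcal M$ and node $n$, if $\mathcal M,n\Vdash\gamma$ for all $\gamma\in\Gamma$ then $\mathcal M,n\Vdash\delta$ for some $\delta\in\Delta$. Notation ''$\varphi,\Gamma$'' means $\{\varphi\}\cup\Gamma$. The calculus $\mathbf{G}$ (each rule written premisses $\Rightarrow$ conclusion): (Ax) axiom $\varphi,\Gamma\vdash\Delta,\varphi$ where $\varphi$ is of the form $@_ip$, $@_ij$ or $\langle i{:}=_{\mathsf c}j{:}\rangle$; ($\bot$) axiom $@_i\bot,\Gamma\vdash\Delta$; ($\to$L) $\Gamma\vdash\Delta,@_i\varphi$ and $@_i\psi,\Gamma\vdash\Delta$ $\Rightarrow$ $@_i(\varphi\to\psi),\Gamma\vdash\Delta$; ($\to$R) $@_i\varphi,\Gamma\vdash\Delta,@_i\psi\Rightarrow\Gamma\vdash\Delta,@_i(\varphi\to\psi)$; ($@$T) $@_ii,\Gamma\vdash\Delta\Rightarrow\Gamma\vdash\Delta$; ($@5$) $@_jk,@_ij,@_ik,\Gamma\vdash\Delta\Rightarrow @_ij,@_ik,\Gamma\vdash\Delta$; (Nom) $@_ij,\Gamma\vdash\Delta\Rightarrow\Gamma\vdash\Delta$, $j$ not in the conclusion; (S$_1$)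 $@_j\varphi,@_ij,@_i\varphi,\Gamma\vdash\Delta\Rightarrow @_ij,@_i\varphi,\Gamma\vdash\Delta$, $\varphi$ of the form $p$, $\bot$ or $\langle\mathsf a\rangle k$; (S$_2$) $@_i\langle\mathsf a\rangle k,@_jk,@_i\langle\mathsf a\rangle j,\Gamma\vdash\Delta\Rightarrow @_jk,@_i\langle\mathsf a\rangle j,\Gamma\vdash\Delta$; (S$_3$) $\langle j{:}=_{\mathsf c}k{:}\rangle,@_ij,\langle i{:}=_{\mathsf c}k{:}\rangle,\Gamma\vdash\Delta\Rightarrow @_ij,\langle i{:}=_{\mathsf c}k{:}\rangle,\Gamma\vdash\Delta$; ($@$L) $@_i\varphi,\Gamma\vdash\Delta\Rightarrow @_j@_i\varphi,\Gamma\vdash\Delta$; ($@$R) $\Gamma\vdash\Delta,@_i\varphi\Rightarrow\Gamma\vdash\Delta,@_j@_i\varphi$; ($\langle\mathsf a\rangle$L) $@_i\langle\mathsf a\rangle j,@_j\varphi,\Gamma\vdash\Delta\Rightarrow @_i\langle\mathsf a\rangle\varphi,\Gamma\vdash\Delta$, $j$ not in the conclusion; ($\langle\mathsf a\rangle$R) $@_i\langle\mathsf a\rangle j,\Gamma\vdash\Delta,@_i\langle\mathsf a\rangle\varphi,@_j\varphi\Rightarrow @_i\langle\mathsf a\rangle j,\Gamma\vdash\Delta,@_i\langle\mathsf a\rangle\varphi$; ($\langle\blacktriangle\rangle$L) $@_i\langle\alpha\rangle j,@_i\langle\beta\rangle k,\langle j{:}\blacktriangle k{:}\rangle,\Gamma\vdash\Delta\Rightarrow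 @_i\langle\alpha\blacktriangle\beta\rangle,\Gamma\vdash\Delta$, $j,k$ distinct and not in the conclusion; ($\langle\blacktriangle\rangle$R) $@_i\langle\alpha\rangle j,@_i\langle\beta\rangle k,\Gamma\vdash\Delta,@_i\langle\alpha\blacktriangle\beta\rangle,\langle j{:}\blacktriangle k{:}\rangle\Rightarrow @_i\langle\alpha\rangle j,@_i\langle\beta\rangle k,\Gamma\vdash\Delta,@_i\langle\alpha\blacktriangle\beta\rangle$; (EqT) $\langle i{:}=_{\mathsf c}i{:}\rangle,\Gamma\vdash\Delta\Rightarrow\Gamma\vdash\Delta$; (Eq5) $\langle j{:}=_{\mathsf c}k{:}\rangle,\langle i{:}=_{\mathsf c}j{:}\rangle,\langle i{:}=_{\mathsf c}k{:}\rangle,\Gamma\vdash\Delta\Rightarrow\langle i{:}=_{\mathsf c}j{:}\rangle,\langle i{:}=_{\mathsf c}k{:}\rangle,\Gamma\vdash\Delta$; (NEqL) $\Gamma\vdash\Delta,\langle i{:}=_{\mathsf c}j{:}\rangle\Rightarrow\langle i{:}\neq_{\mathsf c}j{:}\rangle,\Gamma\vdash\Delta$; (NEqR) $\langle i{:}=_{\mathsf c}j{:}\rangle,\Gamma\vdash\Delta\Rightarrow\Gamma\vdash\Delta,\langle i{:}\neq_{\mathsf c}j{:}\rangle$; (Cut) $\Gamma\vdash\Delta,\varphi$ and $\varphi,\Gamma'\vdash\Delta'\Rightarrow\Gamma,\Gamma'\vdash\Delta,\Delta'$; (WL) $\Gamma\vdash\Delta\Rightarrow\varphi,\Gamma\vdash\Delta$;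 (WR) $\Gamma\vdash\Delta\Rightarrow\Gamma\vdash\Delta,\varphi$. Here $@_i\langle\alpha\rangle j$ for a path $\alpha$ is understood via the abbreviations above. A derivation is a finite tree of sequents in which each non-leaf node is the conclusion of an instance of a rule of $\mathbf G$ whose premisses are its children. A sequent is provable in $\mathbf G$ if it is the root of a derivation all of whose leaves are instances of (Ax) or ($\bot$). *)

From Stdlib Require Import List.
Import ListNotations.
Set Implicit Arguments.

Section Syntax.
Variables (Mod Cmp : Type).

(* Prop = nat (propositions), Nom = nat (nominals): both countably infinite. *)
Inductive path : Type :=
| PMod  : Mod -> path
| PNom  : nat -> path
| PTest : form -> path
| PSeq  : path -> path -> path
with form : Type :=
| FProp : nat -> form
| FNom  : nat -> form
| FBot  : form
| FImp  : form -> form -> form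
| FAt   : nat -> form -> form
| FDia  : Mod -> form -> form
| FEq   : path -> Cmp -> path -> form
| FNeq  : path -> Cmp -> path -> form.

Definition FNeg (phi : form) : form := FImp phi FBot.
Definition FTop : form := FImp FBot FBot.
Definition FAnd (phi psi : form) : form := FNeg (FImp phi (FNeg psi)).

Fixpoint dia (alpha : path) (phi : form) : form :=
  match alpha with
  | PMod a => FDia a phi
  | PNom j => FAt j phi
  | PTest psi => FAnd psi phi
  | PSeq a1 a2 => dia a1 (dia a2 phi)
  end.

(* blacktriangle: b = true is =_c, b = false is !=_c *)
Definition tri (b : bool) (alpha : path) (c : Cmp) (beta : path) : form :=
  if b then FEq alpha c beta else FNeq alpha c beta.

Fixpoint noms_path (alpha : path) : list nat :=
  match alpha with
  | PMod _ => []
  | PNom i => [i]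
  | PTest phi => noms_form phi
  | PSeq a b => noms_path a ++ noms_path b
  end
with noms_form (phi : form) : list nat :=
  match phi with
  | FProp _ | FBot => []
  | FNom i => [i]
  | FImp a b => noms_form a ++ noms_form b
  | FAt i a => i :: noms_form a
  | FDia _ a => noms_form a
  | FEq a _ b | FNeq a _ b => noms_path a ++ noms_path b
  end.

Definition occurs (j : nat) (G D : list form) : Prop :=
  exists phi, In phi (G ++ D) /\ In j (noms_form phi).

Definition seqform (phi : form) : Prop :=
  match phi with
  | FAt _ _ => True
  | FEq (PNom _) _ (PNom _) => True
  | FNeq (PNom _) _ (PNom _) => True
  | _ => False
  end.

Definition seqwf (G D : list form) : Prop :=
  forall phi, In phi (G ++ D) -> seqform phi.

Definition axform (phi : form) : Prop :=
  (exists i p, phi = FAt i (FProp p)) \/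
  (exists i j, phi = FAt i (FNom j)) \/
  (exists i c j, phi = FEq (PNom i) c (PNom j)).

Definition s1form (phi : form) : Prop :=
  (exists p, phi = FProp p) \/ phi = FBot \/ (exists a k, phi = FDia a (FNom k)).

Definition eqn (i : nat) (c : Cmp) (j : nat) : form := FEq (PNom i) c (PNom j).
Definition neqn (i : nat) (c : Cmp) (j : nat) : form := FNeq (PNom i) c (PNom j).

(* Provability in G.  Sequents are finite SETS of formulas, represented by
   lists; the rule [pr_set] identifies lists with the same members. *)
Inductive provable : list form -> list form -> Prop :=
| pr_set G D G' D' :
    provable G D -> (forall x, In x G <-> In x G') -> (forall x, In x D <-> In x D') ->
    provable G' D'
| pr_Ax phi G D : seqwf (phi :: G) (phi :: D) -> axform phi -> provable (phi :: G) (phi :: D)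
| pr_Bot i G D : seqwf (FAt i FBot :: G) D -> provable (FAt i FBot :: G) D
| pr_ImpL i phi psi G D :
    provable G (FAt i phi :: D) -> provable (FAt i psi :: G) D ->
    provable (FAt i (FImp phi psi) :: G) D
| pr_ImpR i phi psi G D :
    provable (FAt i phi :: G) (FAt i psi :: D) -> provable G (FAt i (FImp phi psi) :: D)
| pr_AtT i G D : provable (FAt i (FNom i) :: G) D -> provable G D
| pr_At5 i j k G D :
    provable (FAt j (FNom k) :: FAt i (FNom j) :: FAt i (FNom k) :: G) D ->
    provable (FAt i (FNom j) :: FAt i (FNom k) :: G) D
| pr_Nom i j G D :
    provable (FAt i (FNom j) :: G) D -> ~ occurs j G D -> provable G D
| pr_S1 i j phi G D : s1form phi ->
    provable (FAt j phi :: FAt i (FNom j) :: FAt i phi :: G) D ->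
    provable (FAt i (FNom j) :: FAt i phi :: G) D
| pr_S2 i j k a G D :
    provable (FAt i (FDia a (FNom k)) :: FAt j (FNom k) :: FAt i (FDia a (FNom j)) :: G) D ->
    provable (FAt j (FNom k) :: FAt i (FDia a (FNom j)) :: G) D
| pr_S3 i j k c G D :
    provable (eqn j c k :: FAt i (FNom j) :: eqn i c k :: G) D ->
    provable (FAt i (FNom j) :: eqn i c k :: G) D
| pr_AtL i j phi G D : provable (FAt i phi :: G) D -> provable (FAt j (FAt i phi) :: G) D
| pr_AtR i j phi G D : provable G (FAt i phi :: D) -> provable G (FAt j (FAt i phi) :: D)
| pr_DiaL i j a phi G D :
    provable (FAt i (FDia a (FNom j)) :: FAt j phi :: G) D ->
    ~ occurs j (FAt i (FDia a phi) :: G) D ->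
    provable (FAt i (FDia a phi) :: G) D
| pr_DiaR i j a phi G D :
    provable (FAt i (FDia a (FNom j)) :: G) (FAt i (FDia a phi) :: FAt j phi :: D) ->
    provable (FAt i (FDia a (FNom j)) :: G) (FAt i (FDia a phi) :: D)
| pr_CmpL (b : bool) i j k c alpha beta G D :
    provable (FAt i (dia alpha (FNom j)) :: FAt i (dia beta (FNom k)) ::
              tri b (PNom j) c (PNom k) :: G) D ->
    j <> k ->
    ~ occurs j (FAt i (tri b alpha c beta) :: G) D ->
    ~ occurs k (FAt i (tri b alpha c beta) :: G) D ->
    provable (FAt i (tri b alpha c beta) :: G) D
| pr_CmpR (b : bool) i j k c alpha beta G D :
    provable (FAt i (dia alpha (FNom j)) :: FAt i (dia beta (FNom k)) :: G)
             (FAt i (tri b alpha c beta) :: tri b (PNom j) c (PNom k) :: D) ->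
    provable (FAt i (dia alpha (FNom j)) :: FAt i (dia beta (FNom k)) :: G)
             (FAt i (tri b alpha c beta) :: D)
| pr_EqT i c G D : provable (eqn i c i :: G) D -> provable G D
| pr_Eq5 i j k c G D :
    provable (eqn j c k :: eqn i c j :: eqn i c k :: G) D ->
    provable (eqn i c j :: eqn i c k :: G) D
| pr_NEqL i j c G D : provable G (eqn i c j :: D) -> provable (neqn i c j :: G) D
| pr_NEqR i j c G D : provable (eqn i c j :: G) D -> provable G (neqn i c j :: D)
| pr_Cut phi G D G' D' :
    provable G (phi :: D) -> provable (phi :: G') D' -> provable (G ++ G') (D ++ D')
| pr_WL phi G D : seqform phi -> provable G D -> provable (phi :: G) D
| pr_WR phi G D : seqform phi -> provable G D -> provable G (phi :: D).

End Syntax.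

Arguments PMod {Mod Cmp}. Arguments PNom {Mod Cmp}. Arguments PTest {Mod Cmp}.
Arguments PSeq {Mod Cmp}. Arguments FProp {Mod Cmp}. Arguments FNom {Mod Cmp}.
Arguments FBot {Mod Cmp}. Arguments FImp {Mod Cmp}. Arguments FAt {Mod Cmp}.
Arguments FDia {Mod Cmp}. Arguments FEq {Mod Cmp}. Arguments FNeq {Mod Cmp}.

Record model (Mod Cmp : Type) := Model {
  N : Type;
  N_inhabited : inhabited N;
  R : Mod -> N -> N -> Prop;
  E : Cmp -> N -> N -> Prop;
  E_refl : forall c x, E c x x;
  E_sym : forall c x y, E c x y -> E c y x;
  E_trans : forall c x y z, E c x y -> E c y z -> E c x z;
  g : nat -> N;
  V : nat -> N -> Prop
}.

Section Semantics.
Variables (Mod Cmp : Type) (M : model Mod Cmp).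

Fixpoint path_sem (n n' : N M) (alpha : path Mod Cmp) : Prop :=
  match alpha with
  | PMod a => R M a n n'
  | PNom i => g M i = n'
  | PTest phi => n = n' /\ form_sem n phi
  | PSeq a b => exists n'', path_sem n n'' a /\ path_sem n'' n' b
  end
with form_sem (n : N M) (phi : form Mod Cmp) : Prop :=
  match phi with
  | FProp p => V M p n
  | FNom i => g M i = n
  | FBot => False
  | FImp a b => form_sem n a -> form_sem n b
  | FAt i a => form_sem (g M i) a
  | FDia a b => exists n', R M a n n' /\ form_sem n' b
  | FEq a c b => exists n1 n2, path_sem n n1 a /\ path_sem n n2 b /\ E M c n1 n2
  | FNeq a c b => exists n1 n2, path_sem n n1 a /\ path_sem n n2 b /\ ~ E M c n1 n2
  end.

End Semantics.

Definition valid (Mod Cmp : Type) (G D : list (form Mod Cmp)) : Prop :=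
  forall (M : model Mod Cmp) (n : N M),
    (forall gam, In gam G -> form_sem M n gam) ->
    exists del, In del D /\ form_sem M n del.

From Stdlib Require Import List PeanoNat Classical.
From mathcomp Require Import ssreflect ssrfun ssrbool eqtype choice fintype.

(* Most rules are local: the formulas a
   rule adds or removes are entailed by the others at every node of every
   model.  The three rules with an eigen-nominal (Nom, <a>L, <▲>L) are sound
   because reinterpreting a nominal that does not occur in a formula leaves
   its truth value unchanged, so the fresh nominal can be made to name the
   witness whose existence the conclusion guarantees. *)

Scheme path_ind_mut := Induction for path Sort Prop
with form_ind_mut := Induction for form Sort Prop.
Combined Scheme path_form_ind from path_ind_mut, form_ind_mut.

Definition fupd {A : Type} (f : nat -> A) (j : nat) (x : A) (k : nat) : A :=
  if Nat.eq_dec k j then x else f k.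
Arguments fupd : simpl never.

Lemma fupd_same {A : Type} (f : nat -> A) j x : fupd f j x j = x.
Proof. by rewrite /fupd; case: Nat.eq_dec. Qed.

Lemma fupd_other {A : Type} (f : nat -> A) j x i : i <> j -> fupd f j x i = f i.
Proof. by rewrite /fupd; case: Nat.eq_dec. Qed.

Lemma not_in_app {A : Type} {x : A} {l1 l2 : list A} :
  ~ In x (l1 ++ l2) -> ~ In x l1 /\ ~ In x l2.
Proof. by rewrite in_app_iff => /Decidable.not_or. Qed.

Section Soundness.
Context {Mod Cmp : Type}.
Implicit Types (M : model Mod Cmp) (phi psi : form Mod Cmp) (alpha beta : path Mod Cmp)
  (L G D : list (form Mod Cmp)).

Definition holds_all M (n : N M) L := forall phi, In phi L -> form_sem M n phi.
Definition holds_some M (n : N M) L := exists phi, In phi L /\ form_sem M n phi.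

Lemma holds_all_cons M n phi L :
  holds_all M n (phi :: L) <-> form_sem M n phi /\ holds_all M n L.
Proof.
split=> [h | [hphi hL] psi [<- | hpsi] //]; last exact: hL.
by split=> [| psi hpsi]; apply: h; [left | right].
Qed.

Lemma holds_some_cons M n phi L :
  holds_some M n (phi :: L) <-> form_sem M n phi \/ holds_some M n L.
Proof.
split=> [[psi [[<- | hpsi] h]] | [h | [psi [hpsi h]]]]; [by left | by right; exists psi | |].
- by exists phi; split; [left |].
- by exists psi; split; [right |].
Qed.

Lemma holds_all_app M n L1 L2 :
  holds_all M n (L1 ++ L2) <-> holds_all M n L1 /\ holds_all M n L2.
Proof.
split=> [h | [h1 h2] psi]; last by case/in_app_iff; [apply: h1 | apply: h2].
by split=> psi hpsi; apply: h; apply/in_app_iff; [left | right].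
Qed.

Lemma holds_some_app M n L1 L2 :
  holds_some M n (L1 ++ L2) <-> holds_some M n L1 \/ holds_some M n L2.
Proof.
split=> [[psi [/in_app_iff [h | h] hs]] | [[psi [h hs]] | [psi [h hs]]]].
- by left; exists psi.
- by right; exists psi.
- by exists psi; split; [apply/in_app_iff; left |].
- by exists psi; split; [apply/in_app_iff; right |].
Qed.

Lemma dia_sem M alpha phi n :
  form_sem M n (dia alpha phi) <-> exists n', path_sem M n n' alpha /\ form_sem M n' phi.
Proof.
elim: alpha phi n => [a | i | psi | alpha1 IH1 alpha2 IH2] phi n /=.
- by [].
- by split=> [h | [n' [<- h]]]; first exists (g M i).
- (* [FAnd] is encoded by implication and falsum: extracting its conjuncts is classical. *)
  split=> [h | [n' [[<- hpsi] hphi]] hneg]; last exact: hneg hpsi hphi.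
  by exists n; split; [split | ]; apply: NNPP => hn; apply: h.
- rewrite IH1; split=> [[m [h1 /IH2 [n' [h2 h3]]]] | [n' [[m [h1 h2]] h3]]].
  + by exists n'; split; first exists m.
  + by exists m; split=> //; apply/IH2; exists n'.
Qed.

Definition cmp M (b : bool) (c : Cmp) (x y : N M) : Prop :=
  if b then E M c x y else ~ E M c x y.

Lemma tri_sem M b alpha c beta n :
  form_sem M n (tri b alpha c beta) <->
  exists n1 n2, path_sem M n n1 alpha /\ path_sem M n n2 beta /\ cmp M b c n1 n2.
Proof. by case: b. Qed.

Lemma tri_nom_sem M b i c j n :
  form_sem M n (tri b (PNom i) c (PNom j)) <-> cmp M b c (g M i) (g M j).
Proof.
rewrite tri_sem /=; split=> [[n1 [n2 [<- [<- h]]]] | h] //.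
by exists (g M i), (g M j).
Qed.

Definition upd M (j : nat) (x : N M) : model Mod Cmp :=
  {| N := N M; N_inhabited := N_inhabited M; R := R M; E := E M;
     E_refl := @E_refl _ _ M; E_sym := @E_sym _ _ M; E_trans := @E_trans _ _ M;
     g := fupd (g M) j x; V := V M |}.

Lemma sem_upd_fresh M j x :
  (forall alpha, ~ In j (noms_path alpha) ->
     forall n n', path_sem (upd M j x) n n' alpha <-> path_sem M n n' alpha) /\
  (forall phi, ~ In j (noms_form phi) ->
     forall n, form_sem (upd M j x) n phi <-> form_sem M n phi).
Proof.
have fupd_fresh i : i <> j -> fupd (g M) j x i = g M i by apply: fupd_other.
apply: path_form_ind => /=.
- by [].
- by move=> i /Decidable.not_or [/fupd_fresh -> _].
- by move=> phi IH /IH fr n n'; rewrite fr.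
- move=> alpha IHa beta IHb /not_in_app [/IHa fra /IHb frb] n n'.
  by split=> -[m [/(fra n m) ha /(frb m n') hb]]; exists m.
- by [].
- by move=> i /Decidable.not_or [/fupd_fresh -> _].
- by [].
- by move=> phi IHphi psi IHpsi /not_in_app [/IHphi fphi /IHpsi fpsi] n; rewrite fphi fpsi.
- by move=> i phi IH /Decidable.not_or [/fupd_fresh -> /IH fphi] n; rewrite fphi.
- by move=> a phi IH /IH fr n; split=> -[m [hR /(fr m) h]]; exists m.
- move=> alpha IHa c beta IHb /not_in_app [/IHa fra /IHb frb] n.
  by split=> -[m1 [m2 [/(fra n m1) ha [/(frb n m2) hb hc]]]]; exists m1, m2.
- move=> alpha IHa c beta IHb /not_in_app [/IHa fra /IHb frb] n.
  by split=> -[m1 [m2 [/(fra n m1) ha [/(frb n m2) hb hc]]]]; exists m1, m2.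
Qed.

Lemma path_sem_upd_fresh M j x alpha n n' : ~ In j (noms_path alpha) ->
  path_sem (upd M j x) n n' alpha <-> path_sem M n n' alpha.
Proof. by move=> fr; apply: (sem_upd_fresh M j x).1. Qed.

Lemma form_sem_upd_fresh M j x phi n : ~ In j (noms_form phi) ->
  form_sem (upd M j x) n phi <-> form_sem M n phi.
Proof. by move=> fr; apply: (sem_upd_fresh M j x).2. Qed.

Definition fresh_in j L := forall phi, In phi L -> ~ In j (noms_form phi).

Lemma not_occurs_fresh j G D : ~ occurs j G D -> fresh_in j G /\ fresh_in j D.
Proof.
by move=> nocc; split=> phi hphi hj; apply: nocc; exists phi; rewrite in_app_iff; auto.
Qed.

Lemma fresh_in_cons j phi L :
  fresh_in j (phi :: L) -> ~ In j (noms_form phi) /\ fresh_in j L.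
Proof. by move=> fr; split=> [| psi hpsi]; apply: fr; [left | right]. Qed.

Lemma holds_all_upd_fresh M j x n L :
  fresh_in j L -> holds_all (upd M j x) n L <-> holds_all M n L.
Proof.
by move=> fr; split=> h phi hphi;
  [apply/(form_sem_upd_fresh M j x) | apply/form_sem_upd_fresh]; auto.
Qed.

Lemma holds_some_upd_fresh M j x n L :
  fresh_in j L -> holds_some (upd M j x) n L <-> holds_some M n L.
Proof.
by move=> fr; split=> -[phi [hphi h]]; exists phi; split=> //;
  [apply/(form_sem_upd_fresh M j x) | apply/form_sem_upd_fresh]; auto.
Qed.

Lemma valid_weaken {G D G' D'} : incl G G' -> incl D D' -> valid G D -> valid G' D'.
Proof.
move=> sG sD h M n hG'; have [phi [/sD hphi hs]] := h M n (fun phi hphi => hG' phi (sG phi hphi)).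
by exists phi.
Qed.

Lemma valid_id phi G D : valid (phi :: G) (phi :: D).
Proof. by move=> M n /holds_all_cons [h _]; apply/holds_some_cons; left. Qed.

Lemma valid_at_bot i G D : valid (FAt i FBot :: G) D.
Proof. by move=> M n /holds_all_cons [[]]. Qed.

Lemma valid_impL i phi psi G D :
  valid G (FAt i phi :: D) -> valid (FAt i psi :: G) D ->
  valid (FAt i (FImp phi psi) :: G) D.
Proof.
move=> h1 h2 M n /holds_all_cons [himp hG].
have /holds_some_cons [hphi | //] := h1 M n hG.
by apply: h2; apply/holds_all_cons; split; first exact: himp.
Qed.

Lemma valid_impR i phi psi G D :
  valid (FAt i phi :: G) (FAt i psi :: D) -> valid G (FAt i (FImp phi psi) :: D).
Proof.
move=> h M n hG; apply/holds_some_cons.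
case: (classic (form_sem M (g M i) phi)) => [hphi | hnphi]; last by left.
have /holds_some_cons [hpsi | hD] : holds_some M n (FAt i psi :: D).
  by apply: h; apply/holds_all_cons.
all: by [left | right].
Qed.

Lemma valid_entailed_l phi G D :
  (forall M n, holds_all M n G -> form_sem M n phi) -> valid (phi :: G) D -> valid G D.
Proof. by move=> ent h M n hG; apply: h; apply/holds_all_cons; split; first exact: ent. Qed.

Lemma valid_entailed_r phi psi G D :
  (forall M n, holds_all M n G -> form_sem M n psi -> form_sem M n phi) ->
  valid G (phi :: psi :: D) -> valid G (phi :: D).
Proof.
move=> ent h M n hG; apply/holds_some_cons.
have /holds_some_cons [hphi | /holds_some_cons [hpsi | hD]] := h M n hG.
- by left.
- by left; apply: ent.
- by right.
Qed.

Lemma valid_at_l i j phi G D :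
  valid (FAt i phi :: G) D -> valid (FAt j (FAt i phi) :: G) D.
Proof. by move=> h M n /holds_all_cons hG; apply: h; apply/holds_all_cons. Qed.

Lemma valid_at_r i j phi G D :
  valid G (FAt i phi :: D) -> valid G (FAt j (FAt i phi) :: D).
Proof. by move=> h M n /h /holds_some_cons hD; apply/holds_some_cons. Qed.

Lemma valid_cut phi G D G' D' :
  valid G (phi :: D) -> valid (phi :: G') D' -> valid (G ++ G') (D ++ D').
Proof.
move=> h1 h2 M n /holds_all_app [hG hG']; apply/holds_some_app.
have /holds_some_cons [hphi | hD] := h1 M n hG; last by left.
by right; apply: h2; apply/holds_all_cons.
Qed.

Lemma eqn_sem (M : model Mod Cmp) i c j n :
  form_sem M n (eqn Mod i c j) <-> E M c (g M i) (g M j).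
Proof. exact: (tri_nom_sem M true). Qed.

Lemma valid_at_refl i G D : valid (FAt i (FNom i) :: G) D -> valid G D.
Proof. exact: valid_entailed_l. Qed.

Lemma valid_at_euclid i j k G D :
  valid (FAt j (FNom k) :: FAt i (FNom j) :: FAt i (FNom k) :: G) D ->
  valid (FAt i (FNom j) :: FAt i (FNom k) :: G) D.
Proof.
apply: valid_entailed_l => M n /holds_all_cons [/= hij /holds_all_cons [/= hik _]].
by rewrite hij hik.
Qed.

Lemma valid_at_subst i j phi G D :
  valid (FAt j phi :: FAt i (FNom j) :: FAt i phi :: G) D ->
  valid (FAt i (FNom j) :: FAt i phi :: G) D.
Proof.
apply: valid_entailed_l => M n /holds_all_cons [/= hij /holds_all_cons [/= hphi _]].
by rewrite hij.
Qed.

Lemma valid_dia_subst i j k a G D :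
  valid (FAt i (FDia a (FNom k)) :: FAt j (FNom k) :: FAt i (FDia a (FNom j)) :: G) D ->
  valid (FAt j (FNom k) :: FAt i (FDia a (FNom j)) :: G) D.
Proof.
apply: valid_entailed_l => M n /holds_all_cons [/= hjk /holds_all_cons [/= [m [hR hj]] _]].
by exists m; rewrite hjk.
Qed.

Lemma valid_eqn_subst i j k c G D :
  valid (eqn Mod j c k :: FAt i (FNom j) :: eqn Mod i c k :: G) D ->
  valid (FAt i (FNom j) :: eqn Mod i c k :: G) D.
Proof.
apply: valid_entailed_l => M n /holds_all_cons [hij /holds_all_cons [/eqn_sem hik _]].
by apply/eqn_sem; move: hij => /= ->.
Qed.

Lemma valid_eqn_refl i c G D : valid (eqn Mod i c i :: G) D -> valid G D.
Proof. by apply: valid_entailed_l => M n _; apply/eqn_sem; apply: E_refl. Qed.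

Lemma valid_eqn_euclid i j k c G D :
  valid (eqn Mod j c k :: eqn Mod i c j :: eqn Mod i c k :: G) D ->
  valid (eqn Mod i c j :: eqn Mod i c k :: G) D.
Proof.
apply: valid_entailed_l => M n /holds_all_cons [/eqn_sem hij /holds_all_cons [/eqn_sem hik _]].
by apply/eqn_sem; apply: E_trans (E_sym _ _ _ _ hij) hik.
Qed.

Lemma valid_neqn_l i j c G D :
  valid G (eqn Mod i c j :: D) -> valid (neqn Mod i c j :: G) D.
Proof.
move=> h M n /holds_all_cons [/(tri_nom_sem M false) hne hG].
by have /holds_some_cons [/eqn_sem heq | //] := h M n hG.
Qed.

Lemma valid_neqn_r i j c G D :
  valid (eqn Mod i c j :: G) D -> valid G (neqn Mod i c j :: D).
Proof.
move=> h M n hG; apply/holds_some_cons.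
case: (classic (E M c (g M i) (g M j))) => [heq | hne]; last by left; apply/(tri_nom_sem M false).
by right; apply: h; apply/holds_all_cons; split=> //; apply/eqn_sem.
Qed.

Lemma valid_dia_r i j a phi G D :
  valid (FAt i (FDia a (FNom j)) :: G) (FAt i (FDia a phi) :: FAt j phi :: D) ->
  valid (FAt i (FDia a (FNom j)) :: G) (FAt i (FDia a phi) :: D).
Proof.
apply: valid_entailed_r => M n /holds_all_cons [/= [m [hR hjm]] _] hphi.
by exists m; subst m.
Qed.

Lemma valid_tri_r b i j k c alpha beta G D :
  valid (FAt i (dia alpha (FNom j)) :: FAt i (dia beta (FNom k)) :: G)
        (FAt i (tri b alpha c beta) :: tri b (PNom j) c (PNom k) :: D) ->
  valid (FAt i (dia alpha (FNom j)) :: FAt i (dia beta (FNom k)) :: G)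
        (FAt i (tri b alpha c beta) :: D).
Proof.
apply: valid_entailed_r => M n.
move=> /holds_all_cons [/dia_sem [n1 [ha hj]] /holds_all_cons [/dia_sem [n2 [hb hk]] _]].
move=> /tri_nom_sem; move: hj hk => /= -> -> hc.
by apply/tri_sem; exists n1, n2.
Qed.

Lemma valid_fresh j G G' D :
  ~ occurs j G D ->
  (forall M n, holds_all M n G -> exists x, holds_all (upd M j x) n G') ->
  valid G' D -> valid G D.
Proof.
move=> /not_occurs_fresh [_ frD] witness h M n /witness [x hG'].
exact: proj1 (holds_some_upd_fresh M j x n D frD) (h (upd M j x) n hG').
Qed.

Lemma valid_nom i j G D :
  ~ occurs j G D -> valid (FAt i (FNom j) :: G) D -> valid G D.
Proof.
move=> nocc; have /not_occurs_fresh [frG _] := nocc.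
apply: valid_fresh nocc _ => M n hG.
exists (g M i); apply/holds_all_cons; split; last exact/holds_all_upd_fresh.
rewrite /= fupd_same; case: (Nat.eq_dec i j) => [-> | ij].
- by rewrite fupd_same.
- by rewrite fupd_other.
Qed.

Lemma valid_dia_l i j a phi G D :
  ~ occurs j (FAt i (FDia a phi) :: G) D ->
  valid (FAt i (FDia a (FNom j)) :: FAt j phi :: G) D ->
  valid (FAt i (FDia a phi) :: G) D.
Proof.
move=> nocc; have /not_occurs_fresh [/fresh_in_cons [/not_in_cons [/nesym ij frphi] frG] _] := nocc.
apply: valid_fresh nocc _ => M n /holds_all_cons [[m [hR hphi]] hG].
exists m; apply/holds_all_cons; split; last (apply/holds_all_cons; split).
- by rewrite /= fupd_other //; exists m; rewrite fupd_same.
- by rewrite /= fupd_same; apply/form_sem_upd_fresh.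
- exact/holds_all_upd_fresh.
Qed.

Lemma noms_tri b alpha c beta :
  noms_form (tri b alpha c beta) = noms_path alpha ++ noms_path beta.
Proof. by case: b. Qed.

Lemma valid_tri_l b i j k c alpha beta G D :
  j <> k ->
  ~ occurs j (FAt i (tri b alpha c beta) :: G) D ->
  ~ occurs k (FAt i (tri b alpha c beta) :: G) D ->
  valid (FAt i (dia alpha (FNom j)) :: FAt i (dia beta (FNom k)) ::
         tri b (PNom j) c (PNom k) :: G) D ->
  valid (FAt i (tri b alpha c beta) :: G) D.
Proof.
move=> jk /not_occurs_fresh [/fresh_in_cons [frj frjG] frjD].
move=> /not_occurs_fresh [/fresh_in_cons [frk frkG] frkD] h M n.
move=> /holds_all_cons [/tri_sem [n1 [n2 [h1 [h2 hc]]]] hG].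
rewrite /= noms_tri in frj frk.
move: frj frk => /not_in_cons [/nesym ij /not_in_app [ja jb]].
move=> /not_in_cons [/nesym ik /not_in_app [ka kb]].
apply: proj1 (holds_some_upd_fresh M j n1 n D frjD) _.
apply: proj1 (holds_some_upd_fresh (upd M j n1) k n2 n D frkD) _.
apply: h; set M' := upd (upd M j n1) k n2.
have gi : g M' i = g M i by rewrite /= !fupd_other.
have gj : g M' j = n1 by rewrite /= fupd_other // fupd_same.
have gk : g M' k = n2 by rewrite /= fupd_same.
have path_sem_M' gamma : ~ In j (noms_path gamma) -> ~ In k (noms_path gamma) ->
    forall m, path_sem M' (g M' i) m gamma <-> path_sem M (g M i) m gamma.
  by move=> fj fk m; rewrite gi path_sem_upd_fresh // path_sem_upd_fresh.
apply/holds_all_cons; split; last (apply/holds_all_cons; split; last (apply/holds_all_cons; split)).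
- by apply/dia_sem; exists n1; split; [apply/path_sem_M' | ].
- by apply/dia_sem; exists n2; split; [apply/path_sem_M' | ].
- by apply/tri_nom_sem; rewrite gj gk.
- by apply/holds_all_upd_fresh => //; apply/holds_all_upd_fresh.
Qed.

Lemma provable_valid G D : provable G D -> valid G D.
Proof.
elim=> {G D}; try by eauto using valid_id, valid_at_bot, valid_impL, valid_impR,
  valid_at_refl, valid_at_euclid, valid_nom, valid_at_subst, valid_dia_subst,
  valid_eqn_subst, valid_at_l, valid_at_r, valid_dia_l, valid_dia_r,
  valid_tri_l, valid_tri_r, valid_eqn_refl, valid_eqn_euclid, valid_neqn_l,
  valid_neqn_r, valid_cut.
- by move=> G D G' D' _ h eG eD; apply: valid_weaken h => x; [move/eG | move/eD].
- by move=> phi G D _ _ h; apply: valid_weaken h => //; apply: incl_tl.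
- by move=> phi G D _ _ h; apply: valid_weaken h => //; apply: incl_tl.
Qed.

End Soundness.

Theorem theorem1 (Mod Cmp : finType) (G D : list (form Mod Cmp)) :
  seqwf G D -> provable G D -> valid G D.
Proof.
(* Soundness does not need the sequent to be well formed. *)
by move=> _; apply: provable_valid.
Qed.
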